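(* Let $G$ be a biconnected series-parallel graph without transitive edges, and let $G'$ be a component of $G$ with respect to some separation pair $(s,t)$. Then $G'$ is critical if and only if $G'$ is heavy.
   Context: A biconnected graph is series-parallel if it contains no subdivision of $K_4$. For a biconnected graph $G$, a separation pair is a pair $(s,t)$ of vertices such that $G-s-t$ is disconnected. A transitive edge is an edge joining the two vertices of some separation pair. A component of $G$ with respect to $(s,t)$ is the subgraph induced by $s$, $t$ and the vertex set of one connected component of $G-s-t$; $s,t$ are its poles and its other vertices are internal vertices. A component $G'$ w.r.t. $(s,t)$ is heavy if it has an internal vertex adjacent to neither $s$ nor $t$; otherwise it is light. A component $G'$ is critical if there exist an internal vertex $v$ of $G'$ adjacent to neither $s$ nor $t$, and a simple $s$–$t$ path in $G'$ passing through $v$, written $s - p_s - v - p_t - t$, such that no vertex of the subpath $p_s$ strictly between $s$ and $v$ is adjacent to $t$, and no vertex of the subpath $p_t$ strictly between $v$ and $t$ is adjacent to $s$. *)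

From mathcomp Require Import all_boot.
Set Implicit Arguments. Unset Strict Implicit. Unset Printing Implicit Defensive.

Section Graphs.
Variable T : finType.
Variable e : rel T.

Definition simple_graph : Prop := symmetric e /\ irreflexive e.

Definition connect_in (S : {set T}) (x y : T) : bool :=
  [&& x \in S, y \in S & connect [rel u v | [&& e u v, u \in S & v \in S]] x y].

Definition connected_set (S : {set T}) : Prop :=
  forall x y, x \in S -> y \in S -> connect_in S x y.

Definition biconnected : Prop :=
  2 < #|T| /\ connected_set [set: T] /\
  forall v : T, connected_set (~: [set v]).

(* simple path  x :: q ++ [:: y]  given by its sequence q of internal vertices *)
Definition spath (x y : T) (q : seq T) : bool :=
  path e x (rcons q y) && uniq (x :: rcons q y).

Definition has_K4_subdivision : Prop :=
  exists (b : 'I_4 -> T) (Q : 'I_4 -> 'I_4 -> seq T),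
    injective b /\
    (forall i j : 'I_4, i < j -> spath (b i) (b j) (Q i j)) /\
    (forall (i j : 'I_4) (m : 'I_4), i < j -> b m \notin Q i j) /\
    (forall i j k l : 'I_4, i < j -> k < l -> (i, j) != (k, l) ->
        [disjoint (Q i j) & (Q k l)]).

Definition series_parallel : Prop := biconnected /\ ~ has_K4_subdivision.

Definition separation_pair (s t : T) : Prop :=
  s != t /\ ~ connected_set (~: [set s; t]).

Definition no_transitive_edges : Prop :=
  forall s t, separation_pair s t -> ~~ e s t.

(* C is the vertex set of a connected component of G - s - t; the component
   of G w.r.t. (s,t) is the subgraph induced by C ∪ {s,t} (C = internal
   vertices, s t = poles). *)
Definition component_of (s t : T) (C : {set T}) : Prop :=
  exists2 x, x \notin [set s; t] &
    C = [set y | connect_in (~: [set s; t]) x y].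

Definition heavy (s t : T) (C : {set T}) : Prop :=
  exists2 v, v \in C & ~~ e v s && ~~ e v t.

Definition critical (s t : T) (C : {set T}) : Prop :=
  exists v (q1 q2 : seq T),
    [/\ v \in C, ~~ e v s & ~~ e v t] /\
    [/\ spath s t (q1 ++ v :: q2),
        all (fun z => z \in C) (q1 ++ v :: q2),
        all (fun z => ~~ e z t) q1 &
        all (fun z => ~~ e z s) q2].

End Graphs.

From mathcomp Require Import all_boot.
Set Implicit Arguments. Unset Strict Implicit. Unset Printing Implicit Defensive.

(* Conversely, let v be an internal vertex
   adjacent to neither pole. Biconnectivity puts v on a simple s-t path P (an
   s-t path is rerouted along ears until it passes through v), whose internal
   vertices then all lie in C, while a second component of G - s - t yields
   an s-t path R avoiding C. Suppose a vertex w preceding v on P were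
   adjacent to t. As G has no transitive edges, (w, t) is not a
   separation pair, so v reaches s in G - w - t. The edge wt, the w-t path
   along P through v and the w-t path back along P to s and then along R form
   a theta graph, and the walk from v to s bridges two of its branches: this
   yields a subdivision of K4. Symmetrically, no vertex after v on P is
   adjacent to s. *)

Lemma path_cat_cons (T : Type) (r : rel T) x s1 y s2 :
  path r x (s1 ++ y :: s2) = path r x (rcons s1 y) && path r y s2.
Proof. by rewrite cat_path rcons_path /= andbA. Qed.

Lemma sorted_cat_cons (T : Type) (r : rel T) s1 y s2 :
  sorted r (s1 ++ y :: s2) = sorted r (rcons s1 y) && sorted r (y :: s2).
Proof. by case: s1 => [|x s1] //=; rewrite path_cat_cons. Qed.

Lemma path_prefix (T : Type) (r : rel T) x s1 y s2 :
  path r x (s1 ++ y :: s2) -> path r x (rcons s1 y).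
Proof. by rewrite path_cat_cons => /andP []. Qed.

Lemma uniq_prefix (T : eqType) (x y : T) s1 s2 :
  uniq (x :: s1 ++ y :: s2) -> uniq (x :: rcons s1 y).
Proof.
rewrite -cat_rcons -cat_cons cat_uniq => /andP [].
by rewrite -rcons_cons.
Qed.

Lemma path_rcons_rev (T : Type) (r : rel T) (rsym : symmetric r) x p y :
  path r x (rcons p y) -> path r y (rcons (rev p) x).
Proof.
move=> pxy; rewrite -rev_cons -[y](last_rcons x p) -(belast_rcons x p y) rev_path.
by rewrite (@eq_path _ _ r) // => a b /=; rewrite rsym.
Qed.

Lemma split_first (T : Type) (a : pred T) x p :
  ~~ a x -> a (last x p) ->
  exists p1 y p2, [/\ p = p1 ++ y :: p2, a y & all (predC a) p1].
Proof.
elim: p x => [|y p IHp] x /=; first by move=> /negPf ->.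
move=> _; case ay: (a y); first by exists [::], y, p.
move=> /(IHp y (negbT ay)) [p1 [z [p2 [-> az p1a]]]].
by exists (y :: p1), z, p2; rewrite /= ay.
Qed.

Lemma split_last (T : Type) (a : pred T) s :
  has a s -> exists s1 y s2, [/\ s = s1 ++ y :: s2, a y & all (predC a) s2].
Proof.
elim/last_ind: s => [//|s z IHs]; rewrite has_rcons.
case az: (a z) => /=; first by exists s, z, [::]; rewrite cats1.
move=> /IHs [s1 [y [s2 [-> ay s2a]]]].
by exists s1, y, (rcons s2 z); rewrite rcons_cat rcons_cons all_rcons /= az.
Qed.

Lemma has_cons (T : Type) (a : pred T) x s : has a (x :: s) = a x || has a s.
Proof. by []. Qed.

Lemma has_in_cat (T : eqType) (s1 s2 s : seq T) :
  has [in s1 ++ s2] s = has [in s1] s || has [in s2] s.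
Proof. by rewrite has_sym has_cat !(has_sym _ s). Qed.

Lemma has_in_cons (T : eqType) (x : T) (s1 s : seq T) :
  has [in x :: s1] s = (x \in s) || has [in s1] s.
Proof. by rewrite has_sym /= has_sym. Qed.

Lemma has_in_rev (T : eqType) (s1 s : seq T) : has [in rev s1] s = has [in s1] s.
Proof. by rewrite has_sym has_rev has_sym. Qed.

(* Disjointness bookkeeping: hypotheses and goal are broken into atoms
   [x != y], [x \notin s], [~~ has [in s1] s2] and [uniq s], and every goal
   atom is looked up among the hypotheses, up to symmetry. *)
Ltac seq_norm :=
  repeat progress (
    rewrite ?cons_uniq ?cat_uniq ?rcons_cat ?rcons_uniq ?rev_uniq;
    rewrite ?has_cons ?has_cat ?has_rcons ?has_rev ?has_nil;
    rewrite ?has_in_cat ?has_in_cons ?has_in_rev;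
    rewrite ?mem_cat ?mem_rcons ?in_cons ?mem_rev ?in_nil ?negb_or ?orbF ?andbT ?andbF).

Ltac split_hyps :=
  repeat match goal with H : is_true (_ && _) |- _ => case/andP: H => ? ? end.

Ltac close_atom :=
  solve [assumption | rewrite has_sym; assumption | rewrite eq_sym; assumption | by []].

Ltac seq_facts :=
  seq_norm; intros; split_hyps; repeat (apply/andP; split); close_atom.

Lemma splice_path (T : eqType) (r : rel T) s1 x p y s2 q :
  sorted r (s1 ++ x :: p ++ y :: s2) -> uniq (s1 ++ x :: p ++ y :: s2) ->
  path r x (rcons q y) -> uniq q -> ~~ has [in s1 ++ x :: p ++ y :: s2] q ->
  [/\ sorted r (s1 ++ x :: q ++ y :: s2), uniq (s1 ++ x :: q ++ y :: s2),
      forall z, head z (s1 ++ x :: q ++ y :: s2) = head z (s1 ++ x :: p ++ y :: s2)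
    & forall z, last z (s1 ++ x :: q ++ y :: s2) = last z (s1 ++ x :: p ++ y :: s2)].
Proof.
move=> sorted_p uniq_p path_q uniq_q disj; split.
- move: sorted_p; rewrite !sorted_cat_cons /= !path_cat_cons => /and3P [-> _ ->].
  by rewrite path_q.
- by move: uniq_p uniq_q disj; seq_facts.
- by case: s1 {sorted_p uniq_p disj}.
- by move=> z; rewrite !last_cat /= !last_cat.
Qed.

Section Walks.

Variables (T : finType) (e : rel T).
Hypothesis esym : symmetric e.
Implicit Types (S : {set T}) (x y z : T) (p q : seq T).

Lemma induced_path S x p :
  path [rel u v | [&& e u v, u \in S & v \in S]] x p -> path e x p && all [in S] p.
Proof.
elim: p x => //= y p IHp x /andP [/and3P [exy _ yS] /IHp /andP [-> ->]].
by rewrite exy yS.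
Qed.

Lemma walk_connect_in S x p :
  x \in S -> path e x p -> all [in S] p -> {in x :: p, forall z, connect_in e S x z}.
Proof.
move=> xS pp ap z zp; rewrite /connect_in xS.
have -> /= : z \in S by move: zp; rewrite inE => /orP [/eqP -> | /(allP ap)].
elim: p x xS pp ap zp => [|y p IHp] x xS; first by move=> _ _; rewrite inE => /eqP ->.
move=> /= /andP [exy pp] /andP [yS ap]; rewrite inE => /orP [/eqP -> // | zp].
apply: connect_trans (IHp y yS pp ap zp).
by apply: connect1; rewrite /= exy xS yS.
Qed.

Lemma connect_in_sym S x y : connect_in e S x y -> connect_in e S y x.
Proof.
case/and3P => xS yS c; rewrite /connect_in xS yS /=.
rewrite sym_connect_sym // => a b /=.
by rewrite esym; case: (a \in S); case: (b \in S); rewrite ?andbF.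
Qed.

Lemma connect_in_trans S x y z :
  connect_in e S x y -> connect_in e S y z -> connect_in e S x z.
Proof.
case/and3P => xS _ cxy /and3P [_ zS cyz].
by rewrite /connect_in xS zS (connect_trans cxy cyz).
Qed.

Lemma spath_rev x y q : spath e x y q -> spath e y x (rev q).
Proof.
case/andP => pq uq; apply/andP; split; first exact: path_rcons_rev.
by rewrite -rev_cons -rev_rcons rev_uniq.
Qed.

Lemma spath_of_path x p y :
  path e x (rcons p y) -> x != y -> exists2 q, spath e x y q & {subset q <= p}.
Proof.
move=> pp xy; have := last_rcons x p y.
case: (shortenP pp) => r pr ur sub.
case/lastP: r pr ur sub => [|q z] pq uq sub /=; first by move=> yx; rewrite yx eqxx in xy.
rewrite last_rcons => zy; subst z; exists q; first by apply/andP.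
move=> u uq'; have := sub u; rewrite !mem_rcons !inE uq' orbT => /(_ isT).
case/orP => [/eqP uy | //]; move: uq; rewrite /= rcons_uniq -uy uq'.
by rewrite andbF.
Qed.

Lemma connect_in_spath S x y :
  connect_in e S x y -> x != y -> exists2 q, spath e x y q & all [in S] q.
Proof.
case/and3P => _ _ /connectP [p /induced_path /andP [pp pS] ->].
case/lastP: p pp pS => [|p z] /=; first by rewrite eqxx.
rewrite last_rcons all_rcons => pp /andP [_ pS] xz.
have [q Pq qp] := spath_of_path pp xz.
by exists q => //; apply/allP => u /qp /(allP pS).
Qed.

Lemma spath_prefix x y q q1 z q2 :
  spath e x y q -> rcons q y = q1 ++ z :: q2 -> spath e x z q1.
Proof.
case/andP=> pq uq Eq; move: pq uq; rewrite Eq => pq uq.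
by apply/andP; split; [apply: path_prefix pq | apply: uniq_prefix uq].
Qed.

Lemma spath_suffix x y q q1 z q2 :
  spath e x y q -> x :: q = q1 ++ z :: q2 -> spath e z y q2.
Proof.
case/andP=> pq uq Eq.
have E : x :: rcons q y = q1 ++ z :: rcons q2 y by rewrite -rcons_cons Eq rcons_cat.
have : sorted e (x :: rcons q y) := pq.
rewrite E sorted_cat_cons => /andP [_ pq2].
by move: uq; rewrite E cat_uniq => /and3P [_ _ uq2]; apply/andP.
Qed.

Lemma spath_internal x y q : spath e x y q -> all [in ~: [set x; y]] q.
Proof.
case/andP => _; rewrite /= mem_rcons inE negb_or rcons_uniq => /and3P [/andP [_ xq] yq _].
apply/allP => z zq; rewrite !inE negb_or.
by apply/andP; split; [apply: contraNneq xq => <- | apply: contraNneq yq => <-].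
Qed.

Lemma spath_internal_connect_in x y q :
  spath e x y q -> {in q &, forall u v, connect_in e (~: [set x; y]) u v}.
Proof.
move=> Pq u v; have := spath_internal Pq.
case: q Pq => [//|h q] /andP [/= /andP [_ pq] _] /andP [hS qS] uq vq.
move: pq; rewrite rcons_path => /andP [pq _].
have c := walk_connect_in hS pq qS.
exact: connect_in_trans (connect_in_sym (c u uq)) (c v vq).
Qed.

End Walks.

Section K4Subdivisions.

Variables (T : finType) (e : rel T).
Hypothesis esym : symmetric e.

(* b = (w, x, t, y); entry (i, j) of the table, i < j, is the interior of the
   branch between b i and b j, the branch between w and t being the edge wt. *)
Lemma K4_of_paths (w x t y : T) a1 a2 c1 c2 B :
  path e w (rcons a1 x) -> path e x (rcons a2 t) -> e w t ->
  path e w (rcons c1 y) -> path e t (rcons c2 y) -> path e x (rcons B y) ->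
  uniq (w :: x :: t :: y :: a1 ++ a2 ++ c1 ++ c2 ++ B) -> has_K4_subdivision e.
Proof.
move=> p01 p12 e02 p03 p23 p13 U.
have U4 : uniq [:: w; x; t; y] by move: U; seq_facts.
exists (fun i : 'I_4 => nth w [:: w; x; t; y] i).
exists (fun i j : 'I_4 => nth [::] (nth [::] [:: [:: [::]; a1; [::]; c1];
   [:: [::]; [::]; a2; B]; [:: [::]; [::]; [::]; c2]] i) j).
move: U; seq_norm => U; split_hyps.
split; last split; last split.
- by move=> i j /eqP; rewrite nth_uniq // => /eqP; apply: val_inj.
- by case=> [[|[|[|[|//]]]] ?] [[|[|[|[|//]]]] ?] //= _; rewrite /spath /=;
    seq_norm; rewrite ?p01 ?p12 ?e02 ?p03 ?p23 ?p13 /=;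
    repeat (apply/andP; split); close_atom.
- by case=> [[|[|[|[|//]]]] ?] [[|[|[|[|//]]]] ?] [[|[|[|[|//]]]] ?] //= _;
    seq_norm; close_atom.
- by case=> [[|[|[|[|//]]]] ?] [[|[|[|[|//]]]] ?] [[|[|[|[|//]]]] ?]
    [[|[|[|[|//]]]] ?] //= _ _ _; rewrite disjoint_has; seq_norm; close_atom.
Qed.

Lemma K4_of_theta_chord (w t x y : T) A1 A2 B :
  e w t -> spath e w t A1 -> spath e w t A2 -> ~~ has [in A1] A2 ->
  x \in A1 -> y \in A2 -> spath e x y B ->
  ~~ has [in A1] B -> ~~ has [in A2] B -> w \notin B -> t \notin B ->
  has_K4_subdivision e.
Proof.
move=> ewt + + + xA1 yA2.
case/splitPr: xA1 => a1 a2; case/splitPr: yA2 => c1 c2.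
move=> /andP [P1 U1] /andP [P2 U2] D12 /andP [P3 U3] D13 D23 wB tB.
move: P1 P2; rewrite !rcons_cat !rcons_cons !path_cat_cons.
move=> /andP [pa1 pa2] /andP [pc1 pc2].
apply: (K4_of_paths pa1 pa2 ewt pc1 (path_rcons_rev esym pc2) P3).
by move: U1 U2 U3 D12 D13 D23 wB tB; seq_facts.
Qed.

Lemma K4_of_bridge (w t x0 y0 : T) A1 A2 :
  e w t -> spath e w t A1 -> spath e w t A2 -> ~~ has [in A1] A2 ->
  x0 \in A1 -> y0 \in A2 -> connect_in e (~: [set w; t]) x0 y0 ->
  has_K4_subdivision e.
Proof.
move=> ewt P1 P2 D12 x0A1 y0A2 c.
have x0A2 : x0 \notin A2 by apply: contra D12 => x0A2; apply/hasP; exists x0.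
have x0y0 : x0 != y0 by apply: contraNneq x0A2 => ->.
have [q Pq qS] := connect_in_spath c x0y0.
have [||B0 [y [rest [Eq yA2 B0A2]]]] := @split_first _ [in A2] x0 (rcons q y0).
- exact: x0A2.
- by rewrite last_rcons.
have [|X1 [x [X2 [EX xA1 X2A1]]]] := @split_last _ [in A1] (x0 :: B0).
  by rewrite /= x0A1.
have PX2 : spath e x y X2 := spath_suffix (spath_prefix Pq Eq) EX.
have X2B0 : {subset X2 <= B0}.
  move=> z zX2; have : z \in x0 :: B0 by rewrite EX mem_cat inE zX2 !orbT.
  rewrite inE => /orP [/eqP zx0 | //].
  by move: (allP X2A1 z zX2); rewrite /= zx0 x0A1.
have B0q : {subset B0 <= q}.
  move=> z zB0; have : z \in rcons q y0 by rewrite Eq mem_cat zB0.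
  rewrite mem_rcons inE => /orP [/eqP zy0 | //].
  by move: (allP B0A2 z zB0); rewrite /= zy0 y0A2.
have X2S z : z \in X2 -> z \in ~: [set w; t] by move=> /X2B0 /B0q /(allP qS).
apply: (K4_of_theta_chord ewt P1 P2 D12 xA1 yA2 PX2).
- by apply/hasPn => z /(allP X2A1).
- by apply/hasPn => z /X2B0 /(allP B0A2).
- by apply/negP => /X2S; rewrite !inE eqxx.
- by apply/negP => /X2S; rewrite !inE eqxx orbT.
Qed.

End K4Subdivisions.

Section Biconnected.

Variables (T : finType) (e : rel T).
Hypothesis esym : symmetric e.
Hypothesis connected_G : connected_set e [set: T].
Hypothesis no_cut_vertex : forall a : T, connected_set e (~: [set a]).

(* [L] lists all vertices of a simple s-t path, poles included. *)
Definition st_path (s t : T) (L : seq T) :=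
  [&& sorted e L, uniq L, head t L == s & last s L == t].

Lemma spath_st_path s t q : spath e s t q -> st_path s t (s :: rcons q t).
Proof. by case/andP => pq uq; apply/and4P; split; rewrite //= last_rcons. Qed.

Lemma st_path_ends s t L : s != t -> st_path s t L -> (s \in L) && (t \in L).
Proof.
move=> st /and4P [_ _ hd lt]; case: L hd lt => [|x L] /=.
  by move=> /eqP ts; rewrite ts eqxx in st.
by move=> /eqP -> /eqP <-; rewrite mem_head mem_last.
Qed.

Lemma st_path_spath s t L v :
  s != t -> st_path s t L -> v \in L -> v != s -> v != t ->
  exists q1 q2, spath e s t (q1 ++ v :: q2).
Proof.
move=> st /and4P [so U hd lt] + vs vt.
case: L so U hd lt => [|x M] //= so U /eqP hx; subst x.
case/lastP: M so U => [|P z] so U; first by rewrite /= (negbTE st).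
rewrite last_rcons => /eqP zt; subst z.
rewrite inE (negbTE vs) /= mem_rcons inE (negbTE vt) /= => vP.
case/splitPr: vP so U => q1 q2 so U.
by exists q1, q2; apply/andP.
Qed.

Lemma st_path_splice s t L a b R :
  st_path s t L -> a \in L -> b \in L -> a != b -> path e a (rcons R b) -> uniq R ->
  ~~ has [in L] R -> exists2 L', st_path s t L' & {subset R <= L'}.
Proof.
case/and4P => so U hd lt aL bL ab pR uR hR.
case/splitPr: aL so U hd lt bL hR => L1 L2 so U hd lt.
rewrite mem_cat inE eq_sym (negbTE ab) /= => /orP [bL1 | bL2] hR.
- case/splitPr: bL1 so U hd lt hR => L0 Mid.
  rewrite -catA cat_cons => so U hd lt hR.
  have := splice_path so U (path_rcons_rev esym pR); rewrite rev_uniq has_rev.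
  move=> /(_ uR hR) [so' U' hd' lt'].
  exists (L0 ++ b :: rev R ++ a :: L2); first by rewrite /st_path so' U' hd' lt' hd lt.
  by move=> z zR; rewrite mem_cat inE mem_cat mem_rev zR /= !orbT.
- case/splitPr: bL2 so U hd lt hR => Mid L3 so U hd lt hR.
  have [so' U' hd' lt'] := splice_path so U pR uR hR.
  exists (L1 ++ a :: R ++ b :: L3); first by rewrite /st_path so' U' hd' lt' hd lt.
  by move=> z zR; rewrite mem_cat inE mem_cat zR /= !orbT.
Qed.

Lemma st_path_ear s t L a v :
  s != t -> st_path s t L -> a \in L -> v \notin L ->
  exists b B, [/\ b \in L, a != b, spath e v b B & ~~ has [in L] B].
Proof.
move=> st sL aL vL.
have /andP [sL' tL'] := st_path_ends st sL.
pose g := if a == s then t else s.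
have gL : g \in L by rewrite /g; case: (a == s).
have ga : g != a by rewrite /g; have [-> | as_] := eqVneq a s; rewrite eq_sym.
have vg : v != g by apply: contraNneq vL => ->.
have vNa : v \in ~: [set a] by rewrite !inE; apply: contraNneq vL => ->.
have gNa : g \in ~: [set a] by rewrite !inE.
have [q Pq qa] := connect_in_spath (no_cut_vertex vNa gNa) vg.
have [||B [b [rest [Eq bL BL]]]] := @split_first _ [in L] v (rcons q g).
- exact: vL.
- by rewrite last_rcons.
exists b, B; split => //; last by apply/hasPn => z /(allP BL).
- have : b \in rcons q g by rewrite Eq mem_cat mem_head orbT.
  rewrite eq_sym mem_rcons inE => /orP [/eqP -> // | /(allP qa)].
  by rewrite !inE.
- exact: spath_prefix Pq Eq.
Qed.

(* The ear B from v to L is cut at its last vertex c on the v-a path A; the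
   a-b path through c formed by the tail of A and the tail of B then replaces
   the segment of L between a and b. *)
Lemma st_path_reroute s t L a v A :
  s != t -> st_path s t L -> a \in L -> spath e v a A -> ~~ has [in L] (v :: A) ->
  exists L' Y1 c Y2, [/\ st_path s t L', c \in L' & v :: A = Y1 ++ c :: Y2].
Proof.
move=> st sL aL PA vAL.
have vL : v \notin L by apply: contra vAL => vL; rewrite /= vL.
have [b [B [bL ab PB BL]]] := st_path_ear st sL aL vL.
have [|X1 [c [X2 [EX cA X2A]]]] := @split_last _ [in v :: A] (v :: B).
  by rewrite /= mem_head.
have [Y1 [Y2 EY]] : exists Y1 Y2, v :: A = Y1 ++ c :: Y2.
  by case/splitPr: cA => Y1 Y2; exists Y1, Y2.
have /andP [pY2 uY2] := spath_suffix PA EY.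
have /andP [pX2 uX2] := spath_suffix PB EX.
pose R := rev Y2 ++ c :: X2.
have pR : path e a (rcons R b).
  by rewrite /R rcons_cat rcons_cons path_cat_cons (path_rcons_rev esym pY2) pX2.
have dXY : ~~ has [in Y2] X2.
  apply/hasPn => z zX; have := allP X2A z zX.
  by rewrite /= EY mem_cat inE !negb_or => /and3P [].
have uR : uniq R by move: uY2 uX2 dXY; rewrite /R; seq_facts.
have YL z : z \in c :: Y2 -> z \notin L.
  move=> zY; apply: contra vAL => zL; apply/hasP; exists z => //.
  by rewrite EY mem_cat zY orbT.
have XL z : z \in X2 -> z \notin L.
  move=> zX; have : z \in v :: B by rewrite EX mem_cat inE zX !orbT.
  by rewrite inE => /orP [/eqP -> // | zB]; apply: (hasPn BL).
have hR : ~~ has [in L] R.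
  apply/hasPn => z; rewrite /R mem_cat mem_rev inE => /or3P [zY | /eqP -> | /XL //].
  - by apply: YL; rewrite inE zY orbT.
  - exact/YL/mem_head.
have [L' sL' RL'] := st_path_splice sL aL bL ab pR uR hR.
exists L', Y1, c, Y2; split => //.
by apply: RL'; rewrite /R mem_cat mem_head orbT.
Qed.

Lemma st_path_meets s t L a v A :
  s != t -> st_path s t L -> a \in L -> spath e v a A ->
  exists L' Y1 c Y2, [/\ st_path s t L', c \in L' & v :: A = Y1 ++ c :: Y2].
Proof.
move=> st sL aL PA; have [/hasP [c cA cL] | vAL] := boolP (has [in L] (v :: A)).
  by case/splitPr: cA => Y1 Y2; exists L, Y1, c, Y2.
exact: st_path_reroute st sL aL PA vAL.
Qed.

Lemma st_path_through s t v L :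
  s != t -> st_path s t L -> exists2 L', st_path s t L' & v \in L'.
Proof.
move=> st sL; have /andP [sL' _] := st_path_ends st sL.
have [-> | vs] := eqVneq v s; first by exists L.
have [A0 PA0 _] := connect_in_spath (connected_G (in_setT v) (in_setT s)) vs.
suff reach n A a M : size A < n -> st_path s t M -> a \in M -> spath e v a A ->
    exists2 L', st_path s t L' & v \in L'.
  exact: reach (ltnSn _) sL sL' PA0.
elim: n A a M => // n IHn A a M szA sM aM PA.
have [M' [Y1 [c [Y2 [sM' cM' EY]]]]] := st_path_meets st sM aM PA.
case: Y1 EY => [[-> _] | y Y1 [_ EA]]; first by exists M'.
apply: (IHn Y1 c M') => //.
- by move: szA; rewrite EA size_cat /= addnS ltnS => /(leq_ltn_trans (leq_addr _ _)).
- by apply: spath_prefix PA _; rewrite EA rcons_cat.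
Qed.

Lemma biconnected_spath_through s t v :
  s != t -> v != s -> v != t -> exists q1 q2, spath e s t (q1 ++ v :: q2).
Proof.
move=> st vs vt.
have [q Pq _] := connect_in_spath (connected_G (in_setT s) (in_setT t)) st.
have [L sL vL] := st_path_through v st (spath_st_path Pq).
exact: st_path_spath st sL vL vs vt.
Qed.

Lemma spath_avoiding s t d :
  s != t -> d != s -> d != t -> exists2 P, spath e d s P & all [in ~: [set s; t]] P.
Proof.
move=> st ds dt.
have dNt : d \in ~: [set t] by rewrite !inE.
have sNt : s \in ~: [set t] by rewrite !inE.
have [P PP Pt] := connect_in_spath (no_cut_vertex dNt sNt) ds.
exists P => //; apply/allP => z zP; rewrite !inE negb_or.
have := allP (spath_internal PP) z zP; rewrite !inE negb_or => /andP [_ ->].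
by have := allP Pt z zP; rewrite !inE.
Qed.

End Biconnected.

Section Components.

Variables (T : finType) (e : rel T).
Hypothesis esym : symmetric e.
Variables (s t : T) (C : {set T}).
Hypothesis compC : component_of e s t C.

Lemma component_internal y : y \in C -> y \in ~: [set s; t].
Proof. by case: compC => x0 _ ->; rewrite inE => /and3P []. Qed.

Lemma component_connect_in y z :
  y \in C -> connect_in e (~: [set s; t]) y z -> z \in C.
Proof. by case: compC => x0 _ ->; rewrite !inE => x0y; apply: connect_in_trans. Qed.

Lemma component_connected y z :
  y \in C -> z \in C -> connect_in e (~: [set s; t]) y z.
Proof.
case: compC => x0 _ ->; rewrite !inE => x0y x0z.
exact: connect_in_trans (connect_in_sym esym x0y) x0z.
Qed.

Lemma spath_in_component v (q : seq T) :
  v \in C -> v \in q -> spath e s t q -> all [in C] q.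
Proof.
move=> vC vq Pq; apply/allP => z zq.
exact: component_connect_in vC (spath_internal_connect_in esym Pq vq zq).
Qed.

(* Another component of G - s - t links both poles outside C. *)
Lemma spath_outside_component :
  (forall a : T, connected_set e (~: [set a])) -> separation_pair e s t ->
  exists2 R, spath e s t R & all [predC C] R.
Proof.
move=> no_cut [st sep].
have [d dS dC] : exists2 d, d \in ~: [set s; t] & d \notin C.
  case: (pickP [pred d | (d \in ~: [set s; t]) && (d \notin C)]) => [d /andP [] | inC].
    by exists d.
  have SC x : x \in ~: [set s; t] -> x \in C.
    by move=> xS; move: (inC x); rewrite /= xS /= => /negbFE.
  by case: sep => x y xS yS; apply: component_connected; apply: SC.
have [ds dt] : d != s /\ d != t by move: dS; rewrite !inE negb_or => /andP [].
have ts : t != s by rewrite eq_sym.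
have [P1 P1s P1S] := spath_avoiding no_cut st ds dt.
have [P2 P2t] := spath_avoiding no_cut ts dt ds; rewrite setUC => P2S.
have [pP1 pP2] : path e d (rcons P1 s) /\ path e d (rcons P2 t).
  by case/andP: P1s; case/andP: P2t.
have notC z : connect_in e (~: [set s; t]) d z -> z \notin C.
  move=> dz; apply: contra dC => zC.
  exact: component_connect_in zC (connect_in_sym esym dz).
have W : path e s (rcons (rev P1 ++ d :: P2) t).
  by rewrite rcons_cat rcons_cons path_cat_cons (path_rcons_rev esym pP1).
have [R PR RW] := spath_of_path W st.
exists R => //; apply/allP => z /RW.
rewrite mem_cat mem_rev => /orP [zP1 | zP2]; apply: notC.
- move: pP1; rewrite rcons_path => /andP [pd1 _].
  by apply: (walk_connect_in dS pd1 P1S); rewrite inE zP1 orbT.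
- move: pP2; rewrite rcons_path => /andP [pd2 _].
  exact: (walk_connect_in dS pd2 P2S).
Qed.

End Components.

Section Critical.

Variables (T : finType) (e : rel T).
Hypothesis esym : symmetric e.
Hypothesis noK4 : ~ has_K4_subdivision e.
Hypothesis no_trans : no_transitive_edges e.

Lemma adjacent_connected_set w t :
  e w t -> w != t -> connected_set e (~: [set w; t]).
Proof.
move=> ewt wt x y xS yS; apply/negPn/negP => nc.
by move: (no_trans (conj wt (fun H => negP nc (H x y xS yS)))); rewrite ewt.
Qed.

Lemma spath_prefix_nonadjacent (C : {set T}) s t v q1 q2 R :
  spath e s t (q1 ++ v :: q2) -> all [in C] (q1 ++ v :: q2) ->
  spath e s t R -> all [predC C] R -> all (fun z => ~~ e z t) q1.
Proof.
move=> /andP [pP uP] PC /andP [pR uR] RC.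
apply/allP => w wq1; apply/negP => ewt; apply: noK4.
case/splitPr: wq1 pP uP PC => d1 d2; rewrite -catA cat_cons => pP uP PC.
have dPR : ~~ has [in d1 ++ w :: d2 ++ v :: q2] R.
  apply/hasPn => z zR; apply/negP => zP.
  by have := allP RC z zR; rewrite /= (allP PC z zP).
pose A1 := d2 ++ v :: q2; pose A2 := rev d1 ++ s :: R.
move: pP; rewrite rcons_cat rcons_cons path_cat_cons => /andP [pd1 pA1].
have P1 : spath e w t A1 by rewrite /spath pA1; move: uP; rewrite /A1; seq_facts.
have P2 : spath e w t A2.
  rewrite /spath /A2 rcons_cat rcons_cons path_cat_cons (path_rcons_rev esym pd1) pR.
  by move: uP uR dPR; seq_facts.
have D12 : ~~ has [in A1] A2 by move: uP uR dPR; rewrite /A1 /A2; seq_facts.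
have [wt vw vt sw st] : [/\ w != t, v != w, v != t, s != w & s != t].
  by move: uP uR dPR; seq_norm; intros; split_hyps; split; close_atom.
have vS : v \in ~: [set w; t] by rewrite !inE negb_or vw vt.
have sS : s \in ~: [set w; t] by rewrite !inE negb_or sw st.
apply: (K4_of_bridge esym ewt P1 P2 D12 _ _ (adjacent_connected_set ewt wt vS sS)).
- by rewrite /A1 mem_cat mem_head orbT.
- by rewrite /A2 mem_cat mem_head orbT.
Qed.

Lemma spath_suffix_nonadjacent (C : {set T}) s t v q1 q2 R :
  spath e s t (q1 ++ v :: q2) -> all [in C] (q1 ++ v :: q2) ->
  spath e s t R -> all [predC C] R -> all (fun z => ~~ e z s) q2.
Proof.
move=> Pq qC PR RC.
have Ev : rev (q1 ++ v :: q2) = rev q2 ++ v :: rev q1.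
  by rewrite rev_cat rev_cons cat_rcons.
rewrite -all_rev.
apply: (spath_prefix_nonadjacent (C := C) (s := t) (v := v) (q2 := rev q1) (R := rev R)).
- by rewrite -Ev; apply: spath_rev.
- by rewrite -Ev all_rev.
- exact: spath_rev.
- by rewrite all_rev.
Qed.

End Critical.

Unset Implicit Arguments.

Theorem lemma2 (T : finType) (e : rel T) :
  simple_graph e -> biconnected e -> series_parallel e ->
  no_transitive_edges e ->
  forall (s t : T) (C : {set T}),
    separation_pair e s t -> component_of e s t C ->
    (critical e s t C <-> heavy e s t C).
Proof.
move=> [esym _] [_ [connected_G no_cut]] [_ noK4] no_trans s t C [st sep] compC.
split; first by case=> v [q1 [q2 [[vC nvs nvt] _]]]; exists v => //; rewrite nvs nvt.
case=> v vC /andP [nvs nvt].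
have [vs vt] : v != s /\ v != t.
  by move: (component_internal compC vC); rewrite !inE negb_or => /andP [].
have [q1 [q2 Pv]] := biconnected_spath_through esym connected_G no_cut st vs vt.
have vq : v \in q1 ++ v :: q2 by rewrite mem_cat mem_head orbT.
have inC := spath_in_component esym compC vC vq Pv.
have [R PR RC] := spath_outside_component esym compC no_cut (conj st sep).
exists v, q1, q2; split => //; split => //.
- exact (spath_prefix_nonadjacent esym noK4 no_trans Pv inC PR RC).
- exact (spath_suffix_nonadjacent esym noK4 no_trans Pv inC PR RC).
Qed.
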